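(* Let $A$ be a finite set of options with at least two elements, $v$ a Llull matrix on $A$, $v^*$ its path scores and $T$ its set of path-top choices (as defined in the context). An option $x\in A$ satisfies $T=\{x\}$ if and only if $v^*_{xy}>v^*_{yx}$ for all $y\in A\setminus\{x\}$.
   Context: A Llull matrix on a finite set $A$ is a family of real numbers $v_{xy}\in[0,1]$, indexed by ordered pairs $(x,y)$ of distinct elements of $A$, with $v_{xy}+v_{yx}\le 1$. The path scores are $v^*_{xy}=\max \min(v_{x_0x_1},\dots,v_{x_{m-1}x_m})$, the maximum over all paths $x_0x_1\dots x_m$ with $m\ge1$, $x_0=x$, $x_m=y$, the $x_i$ pairwise distinct. The ranking relation $\succeq$ is defined by: $x\succeq y$ iff there is a path $x_0\dots x_m$ from $x$ to $y$ with $v^*_{x_ix_{i+1}}\ge v^*_{x_{i+1}x_i}$ for all $i<m$. An option $x$ is a path-top choice if $x\succeq y$ for every $y\ne x$; $T$ is the set of path-top choices. *)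

From HB Require Import structures.
From mathcomp Require Import all_boot all_order all_algebra.
From mathcomp Require Import reals.
Set Implicit Arguments. Unset Strict Implicit. Unset Printing Implicit Defensive.
Import Order.TTheory GRing.Theory Num.Theory.
Local Open Scope ring_scope.

Section Llull.
Variables (R : realType) (A : finType).

(* A Llull matrix: v x y is only meaningful for x <> y (the diagonal is
   ignored). *)
Definition llull_matrix (v : A -> A -> R) : Prop :=
  forall x y : A, x != y -> 0 <= v x y /\ v x y <= 1 /\ v x y + v y x <= 1.

(* x :: s is a path x = x_0 x_1 ... x_m = y with m >= 1 and pairwise
   distinct vertices. *)
Definition is_Lpath (x y : A) (s : seq A) : bool :=
  [&& s != [::], last x s == y & uniq (x :: s)].

Fixpoint path_min (w : A -> A -> R) (x : A) (s : seq A) : R :=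
  match s with
  | [::] => 1
  | [:: y] => w x y
  | y :: s' => Num.min (w x y) (path_min w y s')
  end.

(* A path has
   at most #|A| vertices, so its tail s is an n-tuple with n < #|A|.
   (All values lie in [0,1] and a path exists when x <> y, so the
   default 0 of the max is harmless.) *)
Definition vstar (v : A -> A -> R) (x y : A) : R :=
  \big[Num.max/0]_(n < #|A|)
    \big[Num.max/0]_(t : n.-tuple A | is_Lpath x y t) path_min v x t.

Definition ranks (v : A -> A -> R) (x y : A) : bool :=
  [exists n : 'I_#|A|, exists t : n.-tuple A,
     is_Lpath x y t && path (fun a b => vstar v b a <= vstar v a b) x t].

Definition path_top (v : A -> A -> R) : {set A} :=
  [set x | [forall y, (y != x) ==> ranks v x y]].

End Llull.

(* Write a ⪰-step a → b when v*_{ba} <= v*_{ab}.  Since the reals are totally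
   ordered, this relation is total, and the ranking relation is its
   reflexive-transitive closure (on distinct options).  In the closure of a
   total relation, x is the unique source iff no y <> x has a step y → x:
   such a step would make y a source as well, and conversely any path from
   another source z back to x ends with such a step. *)
From HB Require Import structures.
From mathcomp Require Import all_boot all_order all_algebra.
From mathcomp Require Import reals.
Set Implicit Arguments. Unset Strict Implicit. Unset Printing Implicit Defensive.
Import Order.TTheory GRing.Theory Num.Theory.
Local Open Scope ring_scope.

Section Sources.
Variables (A : finType) (e : rel A).

Definition sources : {set A} := [set x | [forall y, connect e x y]].

Lemma connect_last_step z x :
  connect e z x -> z != x -> exists2 w, w != x & e w x.
Proof.
case/connectP=> p; elim: p z => [|y p IHp] z /=; first by move=> _ ->; rewrite eqxx.
case/andP=> e_zy e_yp x_last z_x.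
case: (eqVneq y x) => [y_x|y_x]; last exact: IHp y_x.
by exists z; rewrite // -y_x.
Qed.

Lemma connect_is_Lpath a b : a != b ->
  connect e a b = [exists n : 'I_#|A|, exists t : n.-tuple A,
                     is_Lpath a b t && path e a t].
Proof.
move=> a_b; apply/connectP/existsP => [[p e_p b_last] | [n /existsP[t]]].
- move: a_b; rewrite b_last; case/shortenP: e_p => s e_s s_uniq _ a_s.
  have s_nil : s != [::] by case: s {e_s s_uniq} a_s => //=; rewrite eqxx.
  have s_lt : (size s < #|A|)%N.
    by have := max_card (mem (a :: s)); rewrite (card_uniqP s_uniq).
  exists (Ordinal s_lt); apply/existsP; exists (in_tuple s).
  by rewrite /is_Lpath s_nil eqxx s_uniq e_s.
- by case/andP=> /and3P[_ /eqP <- _] e_t; exists t.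
Qed.

Hypothesis e_total : total e.

Lemma sources_eq_set1 x :
  sources = [set x] <-> forall y, y != x -> ~~ e y x.
Proof.
split=> [src_x y y_x | no_step].
- apply: contra y_x => e_yx.
  have x_src : x \in sources by rewrite src_x set11.
  have : y \in sources.
    rewrite inE; apply/forallP => z; apply: connect_trans (connect1 e_yx) _.
    by move: x_src; rewrite inE => /forallP.
  by rewrite src_x inE.
- apply/setP => z; rewrite !inE; case: (eqVneq z x) => [-> | z_x].
  + apply/forallP => y; case: (eqVneq y x) => [-> | y_x]; first exact: connect0.
    by apply: connect1; move: (e_total x y) (no_step y y_x) => /orP[] ->.
  + apply/negbTE/negP => /forallP/(_ x)/connect_last_step/(_ z_x)[w w_x].
    by apply/negP/no_step.
Qed.

End Sources.

Definition rank_step (R : realType) (A : finType) (v : A -> A -> R) : rel A :=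
  fun a b => vstar v b a <= vstar v a b.

Lemma ranksE (R : realType) (A : finType) (v : A -> A -> R) (a b : A) :
  a != b -> ranks v a b = connect (rank_step v) a b.
Proof. by move=> a_b; rewrite connect_is_Lpath. Qed.

Lemma path_topE (R : realType) (A : finType) (v : A -> A -> R) :
  path_top v = sources (rank_step v).
Proof.
apply/setP => x; rewrite !inE; apply/forallP/forallP => top_x y.
- case: (eqVneq y x) => [-> | y_x]; first exact: connect0.
  by move: (top_x y); rewrite y_x -ranksE // eq_sym.
- by apply/implyP => y_x; rewrite ranksE // eq_sym.
Qed.

Theorem corollary2p3 (R : realType) (A : finType) (v : A -> A -> R) (x : A) :
  (2 <= #|A|)%N -> llull_matrix v ->
  (path_top v = [set x] <-> forall y : A, y != x -> vstar v y x < vstar v x y).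
Proof.
move=> _ _; rewrite path_topE sources_eq_set1; last by move=> a b; exact: le_total.
by split=> no_step y /no_step; rewrite /rank_step -ltNge.
Qed.
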